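(* Let $X$ be a fragment of $\mathrm{FO}(\lambda)$ that contains all sentences (i.e. $\mathrm{FO}_0(\lambda)\subseteq X$) and the formula $(x_1=x_2)$. Then every modeling $X$-limit of a sequence of weakly uniform $\lambda$-modelings is weakly uniform.
   Context: For a $\lambda$-structure $\mathbf A$ with domain $A$ and a first-order formula $\phi$ with free variables among $x_1,\dots,x_p$, $\Omega_\phi(\mathbf A)=\{(v_1,\dots,v_p)\in A^p:\mathbf A\models\phi(v_1,\dots,v_p)\}$. A relational sample space is a $\lambda$-structure whose domain is a standard Borel space in which every $\Omega_\phi(\mathbf A)$ is measurable in the product $\sigma$-algebra; a $\lambda$-modeling is a relational sample space with a probability measure $\nu_{\mathbf A}$, and $\langle\phi,\mathbf A\rangle=\nu_{\mathbf A}^p(\Omega_\phi(\mathbf A))$ (a finite structure is a modeling with the discrete $\sigma$-algebra and uniform measure). A sequence $(\mathbf A_n)$ of modelings is $X$-convergent if $\langle\phi,\mathbf A_n\rangle$ converges for each $\phi\in X$, and a modeling $\mathbf L$ is a modeling $X$-limit of it if $\langle\phi,\mathbf L\rangle=\lim_n\langle\phi,\mathbf A_n\rangle$ for all $\phi\in X$. A modeling is weakly uniform if all singletons of its domain have the same measure. *)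

From HB Require Import structures.
From mathcomp Require Import all_boot all_order all_algebra.
From mathcomp Require Import all_classical all_reals all_analysis.
Set Implicit Arguments. Unset Strict Implicit. Unset Printing Implicit Defensive.
Import Order.TTheory GRing.Theory Num.Theory.
Local Open Scope classical_set_scope.
Local Open Scope ring_scope.

Record signature := Signature { sym : Type ; ar : sym -> nat }.

(* First-order formulas FO(lambda); variable x_{i+1} is represented by index i. *)
Inductive formula (L : signature) : Type :=
  | FEq : nat -> nat -> formula L
  | FRel : forall s : sym L, (ar s).-tuple nat -> formula L
  | FNeg : formula L -> formula L
  | FAnd : formula L -> formula L -> formula L
  | FEx : nat -> formula L -> formula L.

Arguments FEq {L}.

Fixpoint fv (L : signature) (phi : formula L) : seq nat :=
  match phi with
  | FEq i j => [:: i; j]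
  | FRel _ a => val a
  | FNeg f => fv f
  | FAnd f g => fv f ++ fv g
  | FEx i f => [seq j <- fv f | j != i]
  end.

Definition free_among (L : signature) (phi : formula L) (p : nat) : Prop :=
  all (fun i => i < p)%N (fv phi).

Definition sentence (L : signature) (phi : formula L) : Prop := fv phi = [::].

Definition fvb (L : signature) (phi : formula L) : nat :=
  foldr maxn 0%N [seq i.+1 | i <- fv phi].

Definition upd (T : Type) (v : nat -> T) (i : nat) (x : T) : nat -> T :=
  fun j => if j == i then x else v j.

Fixpoint sat (L : signature) (T : Type) (rel : forall s : sym L, (ar s).-tuple T -> Prop)
    (v : nat -> T) (phi : formula L) : Prop :=
  match phi with
  | FEq i j => v i = v j
  | FRel s a => rel s (map_tuple v a)
  | FNeg f => ~ sat rel v f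
  | FAnd f g => sat rel v f /\ sat rel v g
  | FEx i f => exists x : T, sat rel (upd v i x) f
  end.

(* Omega_phi(A) as a subset of A^p (p-tuples); the default value used for
   indices >= p is irrelevant when phi has its free variables among x_1..x_p. *)
Definition Omega (L : signature) (T : pointedType)
    (rel : forall s : sym L, (ar s).-tuple T -> Prop) (phi : formula L) (p : nat)
    : set (p.-tuple T) :=
  [set t | sat rel (fun i => nth point (val t) i) phi].
Arguments Omega {L T} rel phi p.

(* Standard Borel space: Borel-isomorphic to a Borel subset of the reals. *)
Definition standard_borel (R : realType) d (T : measurableType d) : Prop :=
  exists f : T -> R,
    [/\ injective f, measurable_fun setT f, measurable (range f)
      & forall A : set T, measurable A -> measurable (f @` A)].

(* p-fold product measure nu^p on p-tuples, defined by iterated integration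
   (the standard construction of the product measure). *)
Fixpoint prodm (R : realType) d (T : measurableType d) (nu : probability T R) (p : nat)
    : set (p.-tuple T) -> \bar R :=
  match p return set (p.-tuple T) -> \bar R with
  | 0%N => fun S => if `[< S [tuple] >] then 1%E else 0%E
  | q.+1 => fun S => (\int[nu]_x prodm nu (fun t : q.-tuple T => S (cons_tuple x t)))%E
  end.
Arguments prodm {R d T} nu p.

Record modeling (L : signature) (R : realType) := Modeling {
  m_disp : measure_display ;
  m_dom : measurableType m_disp ;
  m_rel : forall s : sym L, (ar s).-tuple m_dom -> Prop ;
  m_std : standard_borel R m_dom ;
  m_meas : forall (phi : formula L) (p : nat), free_among phi p ->
      measurable (Omega m_rel phi p) ;
  m_prob : probability m_dom R }.

(* <phi, A> = nu_A^p (Omega_phi(A)) with p the least admissible arity. *)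
Definition stone (L : signature) (R : realType) (phi : formula L) (A : modeling L R)
    : \bar R :=
  prodm (m_prob A) (fvb phi) (Omega (@m_rel L R A) phi (fvb phi)).

Definition weakly_uniform (L : signature) (R : realType) (A : modeling L R) : Prop :=
  forall x y : m_dom A, m_prob A [set x] = m_prob A [set y].

Definition modeling_limit (L : signature) (R : realType) (X : formula L -> Prop)
    (As : nat -> modeling L R) (Lim : modeling L R) : Prop :=
  forall phi, X phi -> (stone phi (As n) @[n --> \oo] --> stone phi Lim).

From HB Require Import structures.
From mathcomp Require Import all_boot all_order all_algebra.
From mathcomp Require Import all_classical all_reals all_analysis.
From mathcomp Require Import measurable_realfun ring lra.
Set Implicit Arguments. Unset Strict Implicit. Unset Printing Implicit Defensive.
Import Order.TTheory GRing.Theory Num.Theory.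
Local Open Scope classical_set_scope.
Local Open Scope ring_scope.

(* The sentences "there are at least k elements" take the values 0 and 1, so
   along the sequence the cardinality of the domain eventually agrees with the
   one of the limit.  In a weakly uniform modeling with singleton mass a we have
   <x1 = x2> = a, with a <= 1/k when there are k points and a = 1/k when there
   are exactly k.  In any modeling <x1 = x2> = \int nu{x} dnu(x) dominates
   sum_x nu{x}^2 over every finite set of points.  If the limit is infinite,
   this gives nu{x}^2 <= 1/k for all k, hence nu{x} = 0.  If it has exactly N
   points, then sum_x nu{x} = 1 and sum_x nu{x}^2 <= 1/N: this is the equality
   case of Cauchy-Schwarz, so nu{x} = 1/N for every x. *)

Definition card_ge (T : eqType) (k : nat) : Prop :=
  exists s : seq T, uniq s /\ size s = k.

Section Cardinality.
Variable T : eqType.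

Lemma card_ge_or_enum n :
  card_ge T n \/ exists s : seq T, uniq s /\ forall x, x \in s.
Proof.
elim: n => [|n [[s [us ss]]|]]; [by left; exists [::] | | by right].
have [[y ys]|sT] := pselect (exists y, y \notin s).
  by left; exists (y :: s); rewrite /= ys us ss.
right; exists s; split=> // y; apply/negPn/negP => ys.
by apply: sT; exists y.
Qed.

Lemma enum_or_card_ge :
  (exists s : seq T, uniq s /\ forall x, x \in s) \/ forall k, card_ge T k.
Proof.
have [|noenum] := pselect (exists s : seq T, uniq s /\ forall x, x \in s).
  by left.
by right=> k; have [|/noenum] := card_ge_or_enum k.
Qed.

Lemma not_card_ge_enum (s : seq T) :
  (forall x, x \in s) -> ~ card_ge T (size s).+1.
Proof.
move=> sT [s' [us' ss']].
by have := uniq_leq_size us' (fun x _ => sT x); rewrite ss' ltnn.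
Qed.

End Cardinality.

Section Formulas.
Variable L : signature.

Definition ftrue : formula L := FNeg (FEx 0 (FNeg (FEq 0 0))).

Fixpoint fdistinct_from (j k : nat) : formula L :=
  if j is j'.+1 then FAnd (fdistinct_from j' k) (FNeg (FEq j' k)) else ftrue.

Fixpoint fdistinct (k : nat) : formula L :=
  if k is k'.+1 then FAnd (fdistinct k') (fdistinct_from k' k') else ftrue.

Fixpoint fexists_seq (l : seq nat) (f : formula L) : formula L :=
  if l is i :: l' then FEx i (fexists_seq l' f) else f.

Definition fatleast (k : nat) : formula L := fexists_seq (iota 0 k) (fdistinct k).

Lemma fv_fdistinct_from j k :
  (j <= k)%N -> all (fun i => i < k.+1)%N (fv (fdistinct_from j k)).
Proof.
elim: j => [|j IH] //= jk; rewrite all_cat IH ?(ltnW jk) //=.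
by rewrite andbT !ltnS (ltnW jk) leqnn.
Qed.

Lemma fv_fdistinct k : all (fun i => i < k)%N (fv (fdistinct k)).
Proof.
elim: k => [|k IH] //=; rewrite all_cat fv_fdistinct_from // andbT.
by apply: sub_all IH => i /ltnW.
Qed.

Lemma fv_fexists_seq l f : fv (fexists_seq l f) = [seq j <- fv f | j \notin l].
Proof.
elim: l => [|i l IH] /=; first by rewrite filter_predT.
rewrite IH -filter_predI; apply: eq_filter => j /=.
by rewrite in_cons negb_or andbC.
Qed.

Lemma sentence_fatleast k : sentence (fatleast k).
Proof.
rewrite /sentence /fatleast fv_fexists_seq.
elim: (fv (fdistinct k)) (fv_fdistinct k) => //= i s IH /andP[ik sk].
by rewrite mem_iota ik IH.
Qed.

Variables (T : eqType) (rel : forall s : sym L, (ar s).-tuple T -> Prop).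

Lemma sat_ftrue v : sat rel v ftrue.
Proof. by case=> x. Qed.

Lemma sat_fexists_seq l f v :
  sat rel v (fexists_seq l f) <->
  exists w, sat rel (fun j => if j \in l then w j else v j) f.
Proof.
elim: l v => [|i l IH] v /=; first by split=> [h|[w]]; [exists v | ].
have updE w x : (fun j => if j \in l then w j else upd v i x j) =
    (fun j => if j \in i :: l then (if j \in l then w j else x) else v j).
  by apply: funext => j; rewrite /upd in_cons; case: (j \in l); case: eqP.
split=> [[x /IH [w]]|[w hw]].
  by rewrite updE; exists (fun j => if j \in l then w j else x).
exists (w i); apply/IH; exists w; rewrite updE.
suff -> : (fun j => if j \in i :: l then (if j \in l then w j else w i) else v j)
  = (fun j => if j \in i :: l then w j else v j) by [].
by apply: funext => j; rewrite in_cons; case: eqP => [->|_]; case: (_ \in l).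
Qed.

Lemma sat_fdistinct_from v j k :
  sat rel v (fdistinct_from j k) <-> forall i, (i < j)%N -> v i <> v k.
Proof.
elim: j => [|j IH] /=; first by split=> // _; apply: sat_ftrue.
rewrite IH; split=> [[vj vjk] i|vj].
  by rewrite ltnS leq_eqVlt => /predU1P[->|/vj].
by split=> [i ij|]; apply: vj; rewrite // ltnS ltnW.
Qed.

Lemma sat_fdistinct v k :
  sat rel v (fdistinct k) <-> forall i j, (i < j < k)%N -> v i <> v j.
Proof.
elim: k => [|k IH] /=.
  by split=> [_ i j /andP[/leq_ltn_trans h /h]|_]; [|apply: sat_ftrue].
rewrite IH sat_fdistinct_from; split=> [[vk vkk] i j /andP[ij]|vk].
  rewrite ltnS leq_eqVlt => /predU1P[jk|jk]; last by apply: vk; rewrite ij.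
  by rewrite jk in ij *; apply: vkk.
split=> [i j /andP[ij jk]|i ik]; apply: vk; first by rewrite ij ltnS ltnW.
by rewrite ik /=.
Qed.

Lemma sat_fatleast v k : sat rel v (fatleast k) <-> card_ge T k.
Proof.
rewrite sat_fexists_seq; split=> [[w /sat_fdistinct wk]|[s [us <-]]].
  exists [seq w i | i <- iota 0 k]; rewrite size_map size_iota; split=> //.
  rewrite map_inj_in_uniq ?iota_uniq // => i j; rewrite !mem_iota /= => ik jk wij.
  apply/eqP; case: ltngtP => // [ij|ji].
    by have := wk i j; rewrite ij jk !mem_iota ik jk; move/(_ isT).
  by have := wk j i; rewrite ji ik !mem_iota ik jk; move/(_ isT)/(_ (esym wij)).
exists (nth (v 0%N) s); apply/sat_fdistinct => i j /andP[ij js].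
have lti : (i < size s)%N := ltn_trans ij js.
rewrite !mem_iota /= lti js => /eqP; rewrite nth_uniq // => /eqP eij.
by move: ij; rewrite eij ltnn.
Qed.

End Formulas.
Arguments fatleast {L}.

Section MeasureOfFiniteSets.
Local Open Scope ereal_scope.
Context d (T : measurableType d) (R : realType) (mu : {measure set T -> \bar R}).

(* Unlike [ge0_le_integral], no measurability of [g] is needed, since the
   integral of a nonnegative function is a supremum over simple functions. *)
Lemma ge0_le_integralT (f g : T -> \bar R) :
  (forall x, 0 <= f x) -> (forall x, f x <= g x) ->
  \int[mu]_x f x <= \int[mu]_x g x.
Proof.
move=> f0 fg; have g0 x : 0 <= g x by apply: le_trans (fg x).
rewrite !ge0_integralTE //.
apply: ge_ereal_sup => _ [h hf <-]; apply: ereal_sup_ubound; exists h => // x.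
exact: le_trans (hf x) (fg x).
Qed.

Hypothesis mset1 : forall x : T, measurable [set x].

Lemma set_mem_cons (x : T) s :
  [set` x :: s] = [set x] `|` [set` s].
Proof.
apply/seteqP; split=> y /=; rewrite in_cons; first by move/predU1P.
by case=> [->|->]; rewrite ?eqxx ?orbT.
Qed.

Lemma measurable_mem_seq (s : seq T) : measurable [set` s].
Proof.
elim: s => [|x s IH]; last by rewrite set_mem_cons; apply: measurableU.
by rewrite (_ : [set` [::]] = set0) //; apply/seteqP; split.
Qed.

Lemma le_measure_mem_seq (s : seq T) :
  mu [set` s] <= \sum_(x <- s) mu [set x].
Proof.
elim: s => [|x s IH].
  by rewrite big_nil (_ : [set` [::]] = set0) ?measure0 //; apply/seteqP; split.
rewrite set_mem_cons big_cons.
by apply: le_trans (measureU2 _ (mset1 x) (measurable_mem_seq s)) _; apply: leeD.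
Qed.

Lemma measure_mem_seq (s : seq T) :
  uniq s -> mu [set` s] = \sum_(x <- s) mu [set x].
Proof.
elim: s => [|x s IH].
  by rewrite big_nil (_ : [set` [::]] = set0) ?measure0 //; apply/seteqP; split.
move=> /= /andP[xs us]; rewrite set_mem_cons big_cons.
rewrite (measureU mu (mset1 x) (measurable_mem_seq s)); first by rewrite -IH.
by apply/seteqP; split=> y //= [-> ys]; move: xs; rewrite ys.
Qed.

Lemma sum_sqr_measure_set1_le (s : seq T) : uniq s ->
  \sum_(x <- s) mu [set x] * mu [set x] <= \int[mu]_y mu [set y].
Proof.
move=> us; pose F x y := mu [set x] * (\1_[set x] y)%:E.
have F0 x y : 0 <= F x y by apply: mule_ge0; rewrite ?lee_fin.
have m1 (x : T) : measurable_fun setT (fun y => (\1_[set x] y)%:E : \bar R).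
  by apply/measurable_EFinP; apply: measurable_indic.
have mF x : measurable_fun setT (F x) by apply/measurable_funeM.
have sumF y : \sum_(x <- s) F x y = if y \in s then mu [set y] else 0.
  elim: s us => [|x s IH] /=; first by rewrite big_nil.
  move=> /andP[xs us]; rewrite big_cons IH // in_cons /F indicE.
  have [->|yx] := eqVneq y x; first by rewrite mem_set // (negbTE xs) mule1 adde0.
  by rewrite memNset ?mule0 ?add0e // => /eqP; rewrite (negbTE yx).
apply: le_trans (ge0_le_integralT (f := fun y => \sum_(x <- s) F x y) _ _).
- rewrite ge0_integral_sum //; apply: lee_sum => x _.
  by rewrite ge0_integralZl // (integral_indic _ measurableT) ?setIT.
- by move=> y; apply: sume_ge0.
- by move=> y; rewrite sumF; case: ifP.
Qed.

End MeasureOfFiniteSets.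

Lemma eq_inv_size_of_sum_sqr_le (T : eqType) (R : realFieldType) (s : seq T)
    (a : T -> R) :
  uniq s -> (0 < size s)%N ->
  \sum_(x <- s) a x ^+ 2 <= (size s)%:R^-1 -> 1 <= \sum_(x <- s) a x ->
  forall x, x \in s -> a x = (size s)%:R^-1.
Proof.
move=> us s0 sum2 sum1 x xs; set N := (size s)%:R : R.
have N0 : N != 0 by rewrite pnatr_eq0 -lt0n.
have sum_const (c : R) : \sum_(y <- s) c = N * c.
  by rewrite big_const_seq count_predT iter_addr_0 mulr_natl.
have expand : \sum_(y <- s) (a y - N^-1) ^+ 2 =
    \sum_(y <- s) a y ^+ 2 - 2 * N^-1 * \sum_(y <- s) a y + N^-1.
  rewrite (eq_bigr (fun y => a y ^+ 2 - 2 * N^-1 * a y + N^-1 ^+ 2)); last first.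
    by move=> y _; ring.
  by rewrite big_split sumrB /= sum_const -mulr_sumr expr2 mulrA mulfV ?mul1r.
have N1_gt0 : 0 < N^-1 by rewrite invr_gt0 ltr0n.
have dev_le0 : \sum_(y <- s) (a y - N^-1) ^+ 2 <= 0.
  rewrite expand; have := ler_pM2l (mulr_gt0 (ltr0n R 2) N1_gt0) 1 (\sum_(y <- s) a y).
  by rewrite sum1 mulr1; nra.
have devx_le0 : (a x - N^-1) ^+ 2 <= 0.
  apply: le_trans dev_le0; rewrite (bigD1_seq x) //= lerDl.
  by apply: sumr_ge0 => y _; apply: sqr_ge0.
have : (a x - N^-1) ^+ 2 = 0 by apply/eqP; rewrite eq_le devx_le0 sqr_ge0.
by move/eqP; rewrite sqrf_eq0 subr_eq0 => /eqP.
Qed.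

Lemma cvg_indicator_near (R : realType) (u : nat -> Prop) (b : Prop) :
  (if `[< u n >] then 1 else 0 : \bar R)%E @[n --> \oo] -->
    (if `[< b >] then 1 else 0 : \bar R)%E ->
  \forall n \near \oo, u n <-> b.
Proof.
have EFin_ind (P : Prop) :
    (if `[< P >] then 1 else 0 : \bar R)%E = (if `[< P >] then 1 else 0)%:E.
  by case: ifP.
rewrite EFin_ind (funext (fun n => EFin_ind (u n))).
move/fine_cvgP => [_ /cvgrPdist_lt near_b].
apply: filterS (near_b _ (ltr01 : (0 : R) < 1)) => n /=.
by case: (asboolP (u n)); case: (asboolP b); rewrite ?subrr ?normr0 ?subr0 ?sub0r
  ?normrN ?normr1 ?ltxx.
Qed.

Section ModelingMass.
Variables (L : signature) (R : realType) (A : modeling L R).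
Local Notation nu := (m_prob A).
Local Notation T := (m_dom A).

Lemma measurable_set1_modeling (x : T) : measurable [set x].
Proof.
have [f [finj mf _ _]] := m_std A.
rewrite (_ : [set x] = f @^-1` [set f x]); last first.
  by apply/seteqP; split=> y /=; [move->|apply: finj].
by rewrite -[_ @^-1` _]setTI; apply: mf.
Qed.

Lemma stone_fatleast k :
  stone (fatleast k) A = (if `[< card_ge T k >] then 1 else 0)%E.
Proof. by rewrite /stone /fvb (sentence_fatleast _ k) /Omega /= (propext (sat_fatleast _ _ _)). Qed.

Lemma stone_diagE : stone (FEq 0 1) A = (\int[nu]_x nu [set x])%E.
Proof.
apply: eq_integral => x _.
rewrite -[in RHS](setIT [set x]) -integral_indic //; last exact: measurable_set1_modeling.
apply: eq_integral => y _; rewrite indicE.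
by have [->|xy] := asboolP (x = y); [rewrite mem_set | rewrite memNset // => /esym].
Qed.

Definition mass (x : T) : R := fine (nu [set x]).

Lemma mass_ge0 x : 0 <= mass x.
Proof. exact: fine_ge0. Qed.

Lemma prob_set1E x : nu [set x] = (mass x)%:E.
Proof.
rewrite /mass fineK // ge0_fin_numE //.
exact: le_lt_trans (probability_le1 _ (measurable_set1_modeling x)) (ltey _).
Qed.

Lemma sum_prob_set1E (s : seq T) :
  (\sum_(x <- s) nu [set x])%E = (\sum_(x <- s) mass x)%:E.
Proof. by rewrite -sumEFin; apply: eq_bigr => x _; exact: prob_set1E. Qed.

Lemma sum_mass_le1 (s : seq T) : uniq s -> \sum_(x <- s) mass x <= 1.
Proof.
move=> us; rewrite -lee_fin -sum_prob_set1E -measure_mem_seq //.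
  exact/probability_le1/measurable_mem_seq/measurable_set1_modeling.
exact: measurable_set1_modeling.
Qed.

Lemma sum_mass_ge1 (s : seq T) : (forall x, x \in s) -> 1 <= \sum_(x <- s) mass x.
Proof.
move=> sT; rewrite -lee_fin -sum_prob_set1E -(probability_setT nu).
rewrite (_ : setT = [set` s]); last by apply/seteqP; split=> x // _; exact: sT.
exact/le_measure_mem_seq/measurable_set1_modeling.
Qed.

Lemma sum_sqr_mass_le_stone (s : seq T) : uniq s ->
  ((\sum_(x <- s) mass x ^+ 2)%:E <= stone (FEq 0 1) A)%E.
Proof.
move=> us; rewrite stone_diagE -sumEFin.
apply: le_trans (sum_sqr_measure_set1_le nu measurable_set1_modeling us).
by apply: lee_sum => x _; rewrite expr2 EFinM -prob_set1E.
Qed.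

Hypothesis wuA : weakly_uniform A.

Lemma mass_weakly_uniform x : mass x = mass point.
Proof. by rewrite /mass (wuA x point). Qed.

Lemma stone_diag_weakly_uniform : stone (FEq 0 1) A = (mass point)%:E.
Proof.
rewrite stone_diagE (eq_integral (cst (mass point)%:E)); last first.
  by move=> x _; rewrite prob_set1E mass_weakly_uniform.
rewrite integral_cst // -[RHS]mule1; congr (_ * _)%E.
exact: probability_setT.
Qed.

Lemma sum_mass_weakly_uniform (s : seq T) :
  \sum_(x <- s) mass x = (size s)%:R * mass point.
Proof.
rewrite (eq_bigr (fun=> mass point)) => [|x _]; last exact: mass_weakly_uniform.
by rewrite big_const_seq count_predT iter_addr_0 mulr_natl.
Qed.

Lemma card_ge_mass_le k : card_ge T k -> k%:R * mass point <= 1.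
Proof. by move=> [s [us <-]]; rewrite -sum_mass_weakly_uniform sum_mass_le1. Qed.

Lemma not_card_ge_mass_ge k : ~ card_ge T k.+1 -> 1 <= k%:R * mass point.
Proof.
move=> Tk; have [//|[s [us sT]]] := card_ge_or_enum T k.+1.
apply: le_trans (sum_mass_ge1 sT) _; rewrite sum_mass_weakly_uniform.
rewrite ler_wpM2r ?mass_ge0 // ler_nat leqNgt; apply/negP => sk.
by apply: Tk; exists (take k.+1 s); rewrite take_uniq // size_takel.
Qed.

End ModelingMass.
Arguments mass {L R} A x.

Section Limit.
Variables (L : signature) (R : realType).
Variables (As : nat -> modeling L R) (Lim : modeling L R).
Hypothesis wuAs : forall n, weakly_uniform (As n).
Hypothesis cvg_diag :
  stone (FEq 0 1) (As n) @[n --> \oo] --> stone (FEq 0 1) Lim.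
Hypothesis cvg_atleast : forall k,
  stone (fatleast k) (As n) @[n --> \oo] --> stone (fatleast k) Lim.

Lemma near_card_ge k :
  \forall n \near \oo, card_ge (m_dom (As n)) k <-> card_ge (m_dom Lim) k.
Proof.
have := @cvg_atleast k; rewrite stone_fatleast.
by rewrite (funext (fun n => stone_fatleast (As n) k)); apply: cvg_indicator_near.
Qed.

Lemma cvg_mass_point :
  (mass (As n) point)%:E @[n --> \oo] --> stone (FEq 0 1) Lim.
Proof. by rewrite -(funext (fun n => stone_diag_weakly_uniform (@wuAs n))). Qed.

Lemma mass_limit_enum (s : seq (m_dom Lim)) : uniq s -> (forall x, x \in s) ->
  forall x, mass Lim x = (size s)%:R^-1.
Proof.
move=> us sT; set N := size s.
have N_gt0 : (0 < N)%N by rewrite /N; case: s {us N} sT => // /(_ point).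
have N0 : N%:R != 0 :> R by rewrite pnatr_eq0 -lt0n.
have LimN : card_ge (m_dom Lim) N by exists s.
have mass_As : \forall n \near \oo, mass (As n) point = N%:R^-1.
  apply: filterS2 (near_card_ge N) (near_card_ge N.+1) => n [_ geN] [gtN _].
  have NmassE : N%:R * mass (As n) point = 1.
    apply/eqP; rewrite eq_le (card_ge_mass_le (@wuAs n) (geN LimN)) /=.
    by apply: not_card_ge_mass_ge => // /gtN; apply: not_card_ge_enum.
  by apply: (mulfI N0); rewrite NmassE mulfV.
have DE : stone (FEq 0 1) Lim = (N%:R^-1)%:E.
  apply: (cvg_unique (@ereal_hausdorff R) cvg_mass_point); apply: cvg_near_cst.
  by apply: filterS mass_As => n ->.
move=> x; apply: (eq_inv_size_of_sum_sqr_le us N_gt0 _ (sum_mass_ge1 sT) (sT x)).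
by rewrite -lee_fin -DE sum_sqr_mass_le_stone.
Qed.

Lemma mass_limit_infinite :
  (forall k, card_ge (m_dom Lim) k) -> forall x, mass Lim x = 0.
Proof.
move=> LimT x.
have D_le k : (stone (FEq 0 1) Lim <= (k.+1%:R^-1)%:E)%E.
  apply: (cvge_to_le cvg_mass_point); apply: filterS (near_card_ge k.+1) => n [_ /(_ (LimT _))].
  move/(card_ge_mass_le (@wuAs n)).
  by rewrite lee_fin -div1r ler_pdivlMr ?ltr0n // mulrC.
have mass2_le k : mass Lim x ^+ 2 <= k.+1%:R^-1.
  rewrite -lee_fin; apply: le_trans (D_le k).
  by have := sum_sqr_mass_le_stone (s := [:: x]) isT; rewrite big_seq1.
apply/eqP; rewrite -sqrf_eq0 eq_le sqr_ge0 andbT leNgt.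
by apply/negP => /ltr_add_invr [k]; rewrite add0r ltNge mass2_le.
Qed.

Lemma weakly_uniform_limit : weakly_uniform Lim.
Proof.
have [c massE] : exists c, forall x, mass Lim x = c.
  have [[s [us sT]]|LimT] := enum_or_card_ge (m_dom Lim).
  - by exists (size s)%:R^-1; apply: mass_limit_enum.
  - by exists 0; apply: mass_limit_infinite.
by move=> x y; rewrite !prob_set1E !massE.
Qed.

End Limit.

Unset Implicit Arguments.
Theorem lemma8p2 (L : signature) (R : realType) (X : formula L -> Prop)
  (HX0 : forall phi : formula L, sentence phi -> X phi)
  (HXeq : X (FEq 0%N 1%N))
  (As : nat -> modeling L R) (Lim : modeling L R) :
  (forall n, weakly_uniform (As n)) ->
  modeling_limit X As Lim ->
  weakly_uniform Lim.
Proof.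
move=> wuAs Lim_lim.
apply: weakly_uniform_limit wuAs _ _ => [|k]; first exact: Lim_lim.
exact/Lim_lim/HX0/sentence_fatleast.
Qed.
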